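(* Let $C$ be a computad, $d\ge1$, and $c\in\mathrm{Cell}_d(C)$ a $d$-cell with $\mathrm{supp}_d(c)=\emptyset$. Then $\mathrm{supp}_{d-1}(\mathrm{src}\,c)=\mathrm{supp}_{d-1}(\mathrm{tgt}\,c)=\mathrm{supp}_{d-1}(c)$.
   Context: Computads (Dean et al.) are defined by induction on dimension together with their cells: an $n$-computad consists of an $(n-1)$-computad, a set $V_n$ of $n$-dimensional generators, and an attaching function sending each $v\in V_n$ to a pair of parallel $(n-1)$-cells; a computad is a compatible sequence of $n$-computads. The $n$-cells $\mathrm{Cell}_n(C)$ are generated by (i) $\mathrm{var}\,v$ for $v\in V_n$, with source and target given by the attaching function, (ii) $\mathrm{coh}(B,A,f)$ where $B$ is a Batanin tree with $\dim B\le n$, $A$ is a full $(n-1)$-sphere of the pasting diagram $\mathrm{Pos}(B)$, and $f$ assigns to each $k$-position of $B$ a $k$-cell of $C$ compatibly with sources and targets; its source and target are those of $A$ with $f$ substituted. Support: $\mathrm{supp}_n(\mathrm{var}\,v)=\{v\}$ and $\mathrm{supp}_n(\mathrm{coh}(B,A,f))=\bigcup_{p\in\mathrm{Pos}_n(B)}\mathrm{supp}_n(f(p))$ for an $n$-cell; more generally, for $k\le n$, $\mathrm{supp}_k(c)$ is the set of $k$-dimensional generators used in the definition of $c$ or of its iterated sources and targets. *)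

(* Computads of Dean et al., encoded as raw
   syntax of cells over a type of generators plus a typing judgement. *)
From mathcomp Require Import all_boot.
Set Implicit Arguments. Unset Strict Implicit. Unset Printing Implicit Defensive.

Inductive tree : Type := br of seq tree.
Definition leaf : tree := br [::].
Definition children (B : tree) : seq tree := let: br Bs := B in Bs.

Fixpoint tdim (B : tree) : nat :=
  match B with
  | br Bs => (fix go (l : seq tree) : nat :=
                match l with [::] => 0 | B' :: l' => maxn (tdim B').+1 (go l') end) Bs
  end.

(* ---------- Positions of a tree (the generators of the computad Pos(B)) ----------
   br [B_0;...;B_{n-1}] has 0-positions (points) [:: j], 0 <= j <= n, and
   (k+1)-positions  i :: q  with i < n and q a k-position of B_i
   (Pos_{k+1}(B) = coproduct of the Pos_k(B_i)). *)
Definition pos := seq nat.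
Definition pdim (p : pos) : nat := (size p).-1.

Fixpoint posB (B : tree) (p : pos) {struct p} : bool :=
  match p with
  | [::] => false
  | [:: j] => j <= size (children B)
  | i :: q => (i < size (children B)) && posB (nth leaf (children B) i) q
  end.

(* source and target of a position of dimension >= 1; the 1-position
   [:: i; j] (j-th point of B_i) goes from point i to point i+1 *)
Fixpoint psrc (p : pos) : pos :=
  match p with
  | [:: i; _] => [:: i]
  | i :: q => i :: psrc q
  | [::] => [::]
  end.
Fixpoint ptgt (p : pos) : pos :=
  match p with
  | [:: i; _] => [:: i.+1]
  | i :: q => i :: ptgt q
  | [::] => [::]
  end.

(* positions in the k-dimensional source (sg = false) / target (sg = true)
   boundary of B *)
Fixpoint bdry (sg : bool) (k : nat) (B : tree) (p : pos) {struct p} : bool :=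
  match p with
  | [::] => false
  | [:: j] => if k is 0 then j == (if sg then size (children B) else 0)
              else j <= size (children B)
  | i :: q => if k is k'.+1
              then (i < size (children B)) && bdry sg k' (nth leaf (children B) i) q
              else false
  end.

Lemma pos0 (B : tree) : posB B [:: 0].
Proof. by []. Qed.

(* ---------- Raw cells over a type of generators G ----------
   coh B s t f : B a tree, (s,t) a sphere (pair of cells) of Pos(B), and
   f assigns a cell of G to each position of B. *)
Inductive cell (G : Type) : Type :=
| var of G
| coh (B : tree) (s t : cell pos) (f : {p : pos | posB B p} -> cell G).
Arguments var {G}.
Arguments coh {G}.

Record Str (G : Type) := MkStr {
  isgen : G -> Prop;
  gdim : G -> nat;
  gsrc : G -> cell G;
  gtgt : G -> cell G }.

Definition PosS (B : tree) : Str pos :=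
  MkStr (fun p => posB B p) pdim (fun p => var (psrc p)) (fun p => var (ptgt p)).

(* value of f at a position (junk value at invalid positions) *)
Definition lookup (G : Type) (B : tree) (f : {p : pos | posB B p} -> cell G)
  (p : pos) : cell G :=
  (if posB B p as b return posB B p = b -> cell G
   then fun h => f (exist _ p h)
   else fun _ => f (exist _ [:: 0] (pos0 B))) (erefl _).

Fixpoint subst (G : Type) (B : tree) (f : {p : pos | posB B p} -> cell G)
  (c : cell pos) : cell G :=
  match c with
  | var p => lookup f p
  | coh B' s t g => coh B' s t (fun q => subst f (g q))
  end.

Definition csrc (G : Type) (S : Str G) (c : cell G) : cell G :=
  match c with var v => gsrc S v | coh B s t f => subst f s end.
Definition ctgt (G : Type) (S : Str G) (c : cell G) : cell G :=
  match c with var v => gtgt S v | coh B s t f => subst f t end.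

Fixpoint tsupp (G : Type) (c : cell G) : G -> Prop :=
  match c with
  | var v => fun w => w = v
  | coh B s t f => fun w => exists p, tsupp (f p) w
  end.

Fixpoint iterb (G : Type) (S : Str G) (m : nat) (c b : cell G) : Prop :=
  match m with
  | 0 => b = c
  | m'.+1 => iterb S m' (csrc S c) b \/ iterb S m' (ctgt S c) b
  end.

(* supp_k(c) for an n-cell c: the k-dimensional generators used in the
   definition of c or of its iterated sources and targets *)
Definition supp (G : Type) (S : Str G) (n k : nat) (c : cell G) (v : G) : Prop :=
  isgen S v /\ gdim S v = k /\
  exists m, m <= n - k /\ exists b, iterb S m c b /\ tsupp b v.

Definition parallel (G : Type) (S : Str G) (n : nat) (a b : cell G) : Prop :=
  1 <= n -> csrc S a = csrc S b /\ ctgt S a = ctgt S b.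

(* (s,t) (a k-sphere of Pos(B)) is full: supp s = boundary^-_k B and
   supp t = boundary^+_k B (supports in all dimensions) *)
Definition fullsphere (B : tree) (k : nat) (s t : cell pos) : Prop :=
  forall p : pos,
    ((exists j, supp (PosS B) k j s p) <-> bdry false k B p) /\
    ((exists j, supp (PosS B) k j t p) <-> bdry true k B p).

Inductive IsCell : forall (G : Type), Str G -> nat -> cell G -> Prop :=
| IsVar (G : Type) (S : Str G) (n : nat) (v : G) :
    isgen S v -> gdim S v = n -> IsCell S n (var v)
| IsCoh (G : Type) (S : Str G) (n : nat) (B : tree) (s t : cell pos)
    (f : {p : pos | posB B p} -> cell G) :
    1 <= n -> tdim B <= n ->
    IsCell (PosS B) n.-1 s -> IsCell (PosS B) n.-1 t ->
    parallel (PosS B) n.-1 s t ->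
    fullsphere B n.-1 s t ->
    (forall p, IsCell S (pdim (sval p)) (f p)) ->
    (forall p hp hq, 1 <= pdim p ->
        csrc S (f (exist _ p hp)) = f (exist _ (psrc p) hq)) ->
    (forall p hp hq, 1 <= pdim p ->
        ctgt S (f (exist _ p hp)) = f (exist _ (ptgt p) hq)) ->
    IsCell S n (coh B s t f).

Definition wfS (G : Type) (S : Str G) : Prop :=
  forall v n, isgen S v -> gdim S v = n.+1 ->
    IsCell S n (gsrc S v) /\ IsCell S n (gtgt S v) /\
    parallel S n (gsrc S v) (gtgt S v).

From Stdlib Require Import Setoid.
From mathcomp Require Import all_boot.
Set Implicit Arguments. Unset Strict Implicit. Unset Printing Implicit Defensive.

(* Induction on the derivation of the d-cell c = coh(B, A, f).  A (d-1)-generator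
   v of c occurs in some f(p).  If p is a d-position, the induction hypothesis
   for f(p) moves v into f(src p), so p may be taken of dimension d-1, i.e.
   p = pre·j.  The consecutive (d-1)-positions pre·j and pre·(j+1) are the source
   and target of the d-position pre·j·0, and f(pre·j·0) has no d-generators, so
   by induction f(pre·j) and f(pre·(j+1)) contain v alike.  Moving j down to 0
   (resp. up to the last point) reaches the source (resp. target) boundary of B,
   which the full sphere A = (s, t) covers; hence v occurs in f(s) and f(t). *)

Fixpoint pathB (B : tree) (pre : seq nat) : bool :=
  match pre with
  | [::] => true
  | i :: q => (i < size (children B)) && pathB (nth leaf (children B) i) q
  end.

Fixpoint subtree (B : tree) (pre : seq nat) : tree :=
  match pre with [::] => B | i :: q => subtree (nth leaf (children B) i) q end.

Lemma pathB_rcons B pre i :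
  pathB B (rcons pre i) = pathB B pre && (i < size (children (subtree B pre))).
Proof. by elim: pre B => [|j pre IH] B /=; rewrite ?andbT // IH andbA. Qed.

Lemma posB_rcons B pre j :
  posB B (rcons pre j) = pathB B pre && (j <= size (children (subtree B pre))).
Proof.
elim: pre B => [|i pre IH] B //=.
by case E: (rcons pre j) => [|x r]; [case: pre E IH | rewrite -E IH andbA].
Qed.

Lemma bdry_rcons sg B pre j :
  bdry sg (size pre) B (rcons pre j) =
  pathB B pre && (j == if sg then size (children (subtree B pre)) else 0).
Proof.
elim: pre B => [|i pre IH] B //=.
by case E: (rcons pre j) => [|x r]; [case: pre E IH | rewrite -E IH andbA].
Qed.

Lemma pdim_rcons (p : pos) j : pdim (rcons p j) = size p.
Proof. by rewrite /pdim size_rcons. Qed.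

Lemma psrc_cons i q : 1 < size q -> psrc (i :: q) = i :: psrc q.
Proof. by case: q => [|x [|y r]]. Qed.

Lemma ptgt_cons i q : 1 < size q -> ptgt (i :: q) = i :: ptgt q.
Proof. by case: q => [|x [|y r]]. Qed.

Lemma psrc_rcons2 pre i j : psrc (rcons (rcons pre i) j) = rcons pre i.
Proof. by elim: pre => [|k pre IH] //; rewrite !rcons_cons psrc_cons ?IH ?size_rcons. Qed.

Lemma ptgt_rcons2 pre i j : ptgt (rcons (rcons pre i) j) = rcons pre i.+1.
Proof. by elim: pre => [|k pre IH] //; rewrite !rcons_cons ptgt_cons ?IH ?size_rcons. Qed.

Lemma posB_psrc B p : posB B p -> 0 < pdim p -> posB B (psrc p).
Proof.
case/lastP: p => [|p j] //; case/lastP: p => [|pre i] //.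
rewrite psrc_rcons2 !posB_rcons pathB_rcons => /andP[/andP[-> /ltnW]] //.
Qed.

Lemma posB_ptgt B p : posB B p -> 0 < pdim p -> posB B (ptgt p).
Proof.
case/lastP: p => [|p j] //; case/lastP: p => [|pre i] //.
by rewrite ptgt_rcons2 !posB_rcons pathB_rcons => /andP[/andP[-> ]].
Qed.

Lemma pdim_psrc p : 0 < pdim p -> pdim (psrc p) = (pdim p).-1.
Proof.
case/lastP: p => [|p j] //; case/lastP: p => [|pre i] //.
by rewrite psrc_rcons2 !pdim_rcons size_rcons.
Qed.

Lemma tdim_nth Bs i : i < size Bs -> (tdim (nth leaf Bs i)).+1 <= tdim (br Bs).
Proof.
elim: Bs i => [|B Bs IH] [|i] //= lt_i; first exact: leq_maxl.
exact: leq_trans (IH i lt_i) (leq_maxr _ _).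
Qed.

Lemma posB_pdim B p : posB B p -> pdim p <= tdim B.
Proof.
elim: p B => [|i [|j q] IH] [Bs] //= /andP[lt_i /IH].
by rewrite /pdim /= -ltnS => /leq_trans; apply; apply: tdim_nth.
Qed.

Definition cell_pos_ind (P : cell pos -> Prop) (Pvar : forall p, P (var p))
  (Pcoh : forall B s t g, (forall q, P (g q)) -> P (coh B s t g)) : forall c, P c :=
  fix F c := match c with var p => Pvar p | coh B s t g => Pcoh B s t g (fun q => F (g q)) end.

Lemma lookupE G B (f : {p | posB B p} -> cell G) p (hp : posB B p) :
  lookup f p = f (exist _ p hp).
Proof.
rewrite /lookup; move: (erefl (posB B p)).
case: {2 3}(posB B p) => e; first by rewrite (eq_irrelevance e hp).
by rewrite hp in e.
Qed.

Lemma tsupp_subst G B (f : {p | posB B p} -> cell G) (u : cell pos) v :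
  tsupp (subst f u) v <-> exists p, tsupp u p /\ tsupp (lookup f p) v.
Proof.
elim/cell_pos_ind: u => [p | B' s t g IH] /=.
  by split=> [|[_ [-> //]]]; exists p.
split=> [[q /IH [p [up fp]]] | [p [[q uq] fp]]]; first by exists p; split; first exists q.
by exists q; apply/IH; exists p.
Qed.

Lemma tsupp_gdim G (S : Str G) n c v :
  IsCell S n c -> tsupp c v -> isgen S v /\ gdim S v <= n.
Proof.
move=> c_cell; elim: c_cell v => {G S n c} [G S n w gw <- v -> //|].
move=> G S n B s t f _ dimB _ _ _ _ _ _ _ IHf _ _ v [[p hp] /IHf [gv dv]].
by split=> //; apply: leq_trans dv (leq_trans (posB_pdim hp) dimB).
Qed.

Lemma tsupp_subst_coh G B {s t : cell pos} (f : {p | posB B p} -> cell G) k u v :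
  IsCell (PosS B) k u -> tsupp (subst f u) v -> tsupp (coh B s t f) v.
Proof.
move=> u_cell /tsupp_subst [p [/(tsupp_gdim u_cell) [hp _] fp]].
by exists (exist _ p hp); rewrite -lookupE.
Qed.

Definition top_free G (S : Str G) n (c : cell G) : Prop :=
  forall w, isgen S w -> gdim S w = n -> ~ tsupp c w.

Lemma tsupp_bdry_sub G (S : Str G) n c : IsCell S n c -> top_free S n c ->
  forall v, tsupp (csrc S c) v \/ tsupp (ctgt S c) v -> tsupp c v.
Proof.
case=> {G S n c} [G S n w gw dw /(_ w gw dw erefl) [] //|].
move=> G S n B s t f _ _ s_cell t_cell _ _ _ _ _ _ v.
by case=> [/(tsupp_subst_coh s_cell) | /(tsupp_subst_coh t_cell)].
Qed.

Lemma supp_diag G (S : Str G) n c v :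
  supp S n n c v <-> [/\ isgen S v, gdim S v = n & tsupp c v].
Proof.
split=> [[gv [dv [m [+ [b [+ cv]]]]]] | [gv dv cv]].
  by rewrite subnn leqn0 => /eqP -> /= bc; rewrite -bc.
by do 2 split=> //; exists 0; split=> //; exists c.
Qed.

Lemma supp_codim1 G (S : Str G) n c v : 0 < n ->
  supp S n n.-1 c v <->
  [/\ isgen S v, gdim S v = n.-1 &
      tsupp c v \/ tsupp (csrc S c) v \/ tsupp (ctgt S c) v].
Proof.
rewrite /supp => n_gt0; have -> : n - n.-1 = 1 by case: n n_gt0 => // n _; rewrite subSnn.
split=> [[gv [dv [[|[|m]] [//= _ [b [bc cv]]]]]] | [gv dv cv]].
- by split=> //; left; rewrite -bc.
- by split=> //; right; case: bc => <-; [left | right].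
do 2 split=> //; case: cv => [cv | [cv | cv]].
- by exists 0; split=> //; exists c.
- by exists 1; split=> //; exists (csrc S c); split=> //; left.
- by exists 1; split=> //; exists (ctgt S c); split=> //; right.
Qed.

Lemma fullsphere_tsupp B k s t sg p : fullsphere B k s t ->
  bdry sg k B p -> pdim p = k -> tsupp (if sg then t else s) p.
Proof.
move=> /(_ p) [sP tP] + dp.
case: sg => [/tP | /sP] [j up]; case: (up) => _ [/= dj _];
  by rewrite -dj dp in up; case/supp_diag: up.
Qed.

Definition codim1_tsupp_bdry G (S : Str G) n (c : cell G) : Prop :=
  forall v, isgen S v -> gdim S v = n.-1 ->
  (tsupp (csrc S c) v <-> tsupp c v) /\ (tsupp (ctgt S c) v <-> tsupp c v).

Section CohCase.

Variables (G : Type) (S : Str G) (n : nat) (B : tree) (s t : cell pos).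
Variable f : {p | posB B p} -> cell G.
Hypotheses (n_gt0 : 0 < n) (dimB : tdim B <= n).
Hypotheses (s_cell : IsCell (PosS B) n.-1 s) (t_cell : IsCell (PosS B) n.-1 t).
Hypothesis st_full : fullsphere B n.-1 s t.
Hypothesis f_cell : forall p, IsCell S (pdim (sval p)) (f p).
Hypothesis f_codim1 : forall p, 0 < pdim (sval p) ->
  top_free S (pdim (sval p)) (f p) -> codim1_tsupp_bdry S (pdim (sval p)) (f p).
Hypothesis f_src : forall p hp hq, 0 < pdim p ->
  csrc S (f (exist _ p hp)) = f (exist _ (psrc p) hq).
Hypothesis f_tgt : forall p hp hq, 0 < pdim p ->
  ctgt S (f (exist _ p hp)) = f (exist _ (ptgt p) hq).
Hypothesis c_free : top_free S n (coh B s t f).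

Local Notation F := (lookup f).

Lemma F_cell p : posB B p -> IsCell S (pdim p) (F p).
Proof. by move=> hp; rewrite (lookupE f hp); apply: (f_cell (exist _ p hp)). Qed.

Lemma F_top_free p : posB B p -> top_free S n (F p).
Proof.
move=> hp w gw dw; rewrite (lookupE f hp) => fw.
by apply: c_free gw dw _; exists (exist _ p hp).
Qed.

Lemma F_psrc p : posB B p -> 0 < pdim p -> csrc S (F p) = F (psrc p).
Proof.
by move=> hp p_gt0; rewrite (lookupE f hp) (lookupE f (posB_psrc hp p_gt0)); apply: f_src.
Qed.

Lemma F_ptgt p : posB B p -> 0 < pdim p -> ctgt S (F p) = F (ptgt p).
Proof.
by move=> hp p_gt0; rewrite (lookupE f hp) (lookupE f (posB_ptgt hp p_gt0)); apply: f_tgt.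
Qed.

Lemma F_codim1 p : posB B p -> pdim p = n -> codim1_tsupp_bdry S n (F p).
Proof.
move=> hp dp; have p_gt0 : 0 < pdim p by rewrite dp.
have := F_top_free hp; rewrite (lookupE f hp) -dp.
exact: (@f_codim1 (exist (fun p => posB B p) p hp) p_gt0).
Qed.

Section Codim1Generator.

Variable v : G.
Hypotheses (v_gen : isgen S v) (v_dim : gdim S v = n.-1).

Lemma tsupp_F_succ pre j : size pre = n.-1 -> pathB B pre ->
  j < size (children (subtree B pre)) ->
  tsupp (F (rcons pre j.+1)) v <-> tsupp (F (rcons pre j)) v.
Proof.
move=> size_pre path_pre lt_j; set q := rcons (rcons pre j) 0.
have hq : posB B q by rewrite posB_rcons pathB_rcons path_pre lt_j.
have dq : pdim q = n by rewrite pdim_rcons size_rcons size_pre prednK.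
have [src_q tgt_q] := F_codim1 hq dq v_gen v_dim.
rewrite -(ptgt_rcons2 pre j 0) -/q -F_ptgt ?dq //.
rewrite -(psrc_rcons2 pre j 0) -/q -F_psrc ?dq //.
exact: iff_trans tgt_q (iff_sym src_q).
Qed.

Lemma tsupp_F_row pre j : size pre = n.-1 -> pathB B pre ->
  j <= size (children (subtree B pre)) ->
  tsupp (F (rcons pre j)) v <-> tsupp (F (rcons pre 0)) v.
Proof.
move=> size_pre path_pre; elim: j => [|j IH] le_j //.
exact: iff_trans (tsupp_F_succ size_pre path_pre le_j) (IH (ltnW le_j)).
Qed.

Lemma tsupp_F_codim1 p : posB B p -> pdim p = n.-1 -> tsupp (F p) v ->
  tsupp (subst f s) v /\ tsupp (subst f t) v.
Proof.
case/lastP: p => [|pre j] //; rewrite posB_rcons pdim_rcons.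
move=> /andP[path_pre le_j] size_pre /(tsupp_F_row size_pre path_pre le_j) fv.
set k := size (children (subtree B pre)).
have src_pre : bdry false n.-1 B (rcons pre 0) by rewrite -size_pre bdry_rcons path_pre.
have tgt_pre : bdry true n.-1 B (rcons pre k) by rewrite -size_pre bdry_rcons path_pre eqxx.
split; apply/tsupp_subst.
- exists (rcons pre 0); split=> //.
  by apply: (fullsphere_tsupp st_full src_pre); rewrite pdim_rcons.
- exists (rcons pre k); split; last exact/(tsupp_F_row size_pre path_pre).
  by apply: (fullsphere_tsupp st_full tgt_pre); rewrite pdim_rcons.
Qed.

Lemma tsupp_coh_codim1 :
  tsupp (coh B s t f) v -> tsupp (subst f s) v /\ tsupp (subst f t) v.
Proof.
case=> -[p hp]; rewrite -(lookupE f hp) => fv.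
have [_ le_vp] := tsupp_gdim (F_cell hp) fv.
have := leq_trans (posB_pdim hp) dimB; rewrite leq_eqVlt => /orP[/eqP dp | lt_pn].
  have p_gt0 : 0 < pdim p by rewrite dp.
  apply: (tsupp_F_codim1 (posB_psrc hp p_gt0)); first by rewrite pdim_psrc dp.
  by rewrite -F_psrc //; apply/(F_codim1 hp dp v_gen v_dim).1.
apply: tsupp_F_codim1 hp _ fv.
by apply/eqP; rewrite eqn_leq -ltnS prednK // lt_pn -v_dim le_vp.
Qed.

End Codim1Generator.

Lemma coh_codim1_tsupp_bdry : codim1_tsupp_bdry S n (coh B s t f).
Proof.
move=> v gv dv /=; have coh_v := tsupp_coh_codim1 gv dv.
split; split.
- exact: tsupp_subst_coh s_cell.
- by case/coh_v.
- exact: tsupp_subst_coh t_cell.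
- by case/coh_v.
Qed.

End CohCase.

Lemma IsCell_codim1_tsupp_bdry G (S : Str G) n c :
  IsCell S n c -> 0 < n -> top_free S n c -> codim1_tsupp_bdry S n c.
Proof.
elim=> {G S n c} [G S n w gw dw _ /(_ w gw dw erefl) [] //|].
move=> G S n B s t f n_gt0 dimB s_cell _ t_cell _ _ st_full f_cell f_codim1.
move=> f_src f_tgt _ c_free; exact: coh_codim1_tsupp_bdry.
Qed.

Theorem lemma5p6 (G : Type) (S : Str G) (d : nat) (c : cell G) :
  wfS S -> 1 <= d -> IsCell S d c ->
  (forall v, ~ supp S d d c v) ->
  (forall v, supp S d.-1 d.-1 (csrc S c) v <-> supp S d d.-1 c v) /\
  (forall v, supp S d.-1 d.-1 (ctgt S c) v <-> supp S d d.-1 c v).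
Proof.
move=> _ d_gt0 c_cell no_top.
have c_free : top_free S d c by move=> w gw dw cw; apply: (no_top w); apply/supp_diag.
have bdry_eq := IsCell_codim1_tsupp_bdry c_cell d_gt0 c_free.
have bdry_sub := tsupp_bdry_sub c_cell c_free.
split=> v; rewrite supp_diag supp_codim1 //; split=> -[gv dv cv]; split=> //.
- by right; left.
- by apply/(bdry_eq v gv dv).1; case: cv => [// | /bdry_sub].
- by right; right.
- by apply/(bdry_eq v gv dv).2; case: cv => [// | /bdry_sub].
Qed.
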